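(* Let $R=GR(4,m)$ with $m$ odd, and let $\mathcal{T}$ be its Teichmüller set. Then (1) the multiset $\mathcal{T}+\mathcal{T}+\mathcal{T}=\{X+Y+Z:X,Y,Z\in\mathcal{T}\}$ contains each element of $-\mathcal{T}$ with multiplicity one, and each element of $R$ outside $-\mathcal{T}$ with multiplicity $2^m+1$; (2) the multiset $\mathcal{T}+\mathcal{T}-\mathcal{T}=\{X+Y-Z:X,Y,Z\in\mathcal{T}\}$ contains each element of $\mathcal{T}$ with multiplicity $2^{m+1}-1$, and each element of $R$ outside $\mathcal{T}$ with multiplicity $2^m-1$.
   Context: $R=GR(4,m)=\mathbb{Z}_4[x]/(f(x))$ with $f$ monic of degree $m$ irreducible mod 2 (the Galois ring of order $4^m$). $\mathcal{T}=\{0,1,\beta,\dots,\beta^{2^m-2}\}$ where $\beta\in R^*$ has multiplicative order $2^m-1$ (Teichmüller set), and $-\mathcal{T}=\{-X:X\in\mathcal{T}\}$. Multisets count ordered tuples. *)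

From HB Require Import structures.
From mathcomp Require Import all_boot all_order all_algebra.
Set Implicit Arguments. Unset Strict Implicit. Unset Printing Implicit Defensive.
Import GRing.Theory.
Local Open Scope ring_scope.

Definition red2 (a : 'Z_4) : 'F_2 := (nat_of_ord a)%:R.

(* The Galois ring GR(4,m) = Z_4[x]/(f) is {poly %/ f}, for f monic of
   degree m irreducible mod 2 (hypotheses stated in the theorem). *)

Definition teich (f : {poly 'Z_4}) (m : nat) (beta : {poly %/ f}) : {set {poly %/ f}} :=
  0 |: [set beta ^+ (nat_of_ord i) | i : 'I_(2 ^ m - 1)].

Definition negset (f : {poly 'Z_4}) (T : {set {poly %/ f}}) : {set {poly %/ f}} :=
  [set - x | x in T].

(* multiplicity of r in the multiset {X + Y + s*Z : X,Y,Z in T} (ordered triples) *)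
Definition mult_sum3 (f : {poly 'Z_4}) (T : {set {poly %/ f}}) (s r : {poly %/ f}) : nat :=
  #|[set t : {poly %/ f} * {poly %/ f} * {poly %/ f} |
      [&& t.1.1 \in T, t.1.2 \in T, t.2 \in T & t.1.1 + t.1.2 + s * t.2 == r]]|.

From HB Require Import structures.
From mathcomp Require Import all_boot all_order all_algebra all_field.
From mathcomp Require Import ring.
Set Implicit Arguments. Unset Strict Implicit. Unset Printing Implicit Defensive.
Import GRing.Theory FinRing.Theory.
Local Open Scope ring_scope.

(** Every r in GR(4,m) is uniquely t + 2s with t Teichmüller and s determined
    modulo 2, and reduction mod 2 maps the Teichmüller set bijectively onto the
    residue field F = GF(2^m).  For Teichmüller X, Y, Z with residues x, y, z the
    carry is explicit: X + Y + Z = E + 2w with E Teichmüller and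
    w^2 = xy + (x + y)z mod 2.  Counting triples with X + Y + Z = t + 2s thus
    becomes counting (x, y, z) in F^3 with x + y + z = a and xy + (x + y)z = b^2,
    where a, b are the residues of t, s.  The substitution x = u + a, y = v + a,
    z = u + v + a turns this into u^2 + uv + v^2 = (a + b)^2, whose number of
    solutions is 1 or 2^m + 1 because t^2 + t + 1 has no root in F for m odd;
    here a = b exactly when r = -t.  For X + Y - Z one uses -Z = Z + 2Z, which adds
    z^2 to the carry and turns the equation into uv = b^2. *)

Definition e2 (R : comNzRingType) (x y z : R) := x * y + (x + y) * z.

Section FinFieldHyperbola.
Variable F : finFieldType.

Lemma card_mul_eq0 : #|[set p : F * F | p.1 * p.2 == 0]| = (#|F|.*2).-1.
Proof.
have -> : [set p : F * F | p.1 * p.2 == 0] =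
    [set (0, v) | v : F] :|: [set (u, 0) | u : F].
  apply/setP => -[u v]; rewrite !inE mulf_eq0 /=.
  apply/orP/orP => [[/eqP ->|/eqP ->]|[/imsetP[x _ [-> _]]|/imsetP[x _ [_ ->]]]].
  - by left; apply/imsetP; exists v.
  - by right; apply/imsetP; exists u.
  - by left.
  - by right.
rewrite cardsU.
have -> : [set (0, v) | v : F] :&: [set (u, 0) | u : F] = [set (0, 0)].
  apply/setP => -[u v]; rewrite !inE; apply/andP/eqP.
    by case=> /imsetP[x _ [-> _]] /imsetP[y _ [_ ->]].
  by case=> -> ->; split; apply/imsetP; exists 0.
rewrite cards1 !card_imset; [|by move=> x y [] | by move=> x y []].
by rewrite addnn subn1.
Qed.

Lemma card_mul_eq c : c != 0 -> #|[set p : F * F | p.1 * p.2 == c]| = #|F|.-1.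
Proof.
move=> c_neq0.
have -> : [set p : F * F | p.1 * p.2 == c] = [set (u, c / u) | u in [set~ 0]].
  apply/setP => -[u v]; rewrite !inE /=; apply/eqP/imsetP => [uv_c|].
    have u_neq0 : u != 0 by apply: contraNneq c_neq0 => u0; rewrite -uv_c u0 mul0r.
    by exists u; rewrite ?inE // -uv_c mulrC mulKf.
  by case=> x; rewrite !inE => x_neq0 [-> ->]; rewrite mulrC divfK.
by rewrite card_imset ?cardsC1 // => x y [].
Qed.

End FinFieldHyperbola.

Section CharTwoFinField.
Variable F : finFieldType.
Hypothesis pcharF : 2 \in [pchar F].

(* Identities of characteristic 2 are proved by [ring] once the even part [z] is named. *)
Lemma pchar2_eq (x y z : F) : x = y + 2%:R * z -> x = y.
Proof. by rewrite (pcharf0 pcharF) mul0r addr0. Qed.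

Lemma sqrf_inj : injective (fun x : F => x ^+ 2).
Proof.
move=> x y /= e; apply/eqP; rewrite -subr_eq0.
have := pFrobenius_autB_comm pcharF (mulrC x y).
by rewrite !pFrobenius_autE e subrr => /eqP; rewrite expf_eq0.
Qed.

Lemma sqrrD_pchar2 (x y : F) : (x + y) ^+ 2 = x ^+ 2 + y ^+ 2.
Proof. by rewrite sqrrD -mulr_natr (pcharf0 pcharF) mulr0 addr0. Qed.

Definition sqrtf : F -> F := invF sqrf_inj.

Lemma sqrtfK : cancel sqrtf (fun x => x ^+ 2). Proof. exact: f_invF. Qed.
Lemma sqrfK : cancel (fun x => x ^+ 2) sqrtf. Proof. exact: invF_f. Qed.

Lemma no_root_x2x1 : (#|F| %% 3 = 2)%N -> forall t : F, t ^+ 2 + t + 1 != 0.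
Proof.
move=> cardF t; apply/negP => /eqP root_t.
have t3 : t ^+ 3 = 1.
  have -> : t ^+ 3 = (t - 1) * (t ^+ 2 + t + 1) + 1 by ring.
  by rewrite root_t mulr0 add0r.
have t2 : t ^+ 2 = t.
  by rewrite -{2}(expf_card t) (divn_eq #|F| 3) cardF exprD mulnC exprM t3 expr1n mul1r.
by move: root_t; rewrite t2 addrr_pchar2 // add0r => /eqP; rewrite oner_eq0.
Qed.

(* [(u, v) |-> (u + a, v + a, u + v + a)] parametrizes the plane [x + y + z = a]. *)
Lemma card_sum3_shift (a : F) (P : F -> F -> F -> bool) (Q : F -> F -> bool) :
  (forall u v, P (u + a) (v + a) (u + v + a) = Q u v) ->
  #|[set p : F * F * F | (p.1.1 + p.1.2 + p.2 == a) && P p.1.1 p.1.2 p.2]|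
    = #|[set p : F * F | Q p.1 p.2]|.
Proof.
move=> PQ; pose g (p : F * F) := (p.1 + a, p.2 + a, p.1 + p.2 + a).
have g_inj : injective g by move=> [x1 x2] [y1 y2] [/addIr -> /addIr ->].
rewrite -(card_imset _ g_inj); apply: eq_card => -[[x y] z].
have shiftK u : u + a + a = u by apply: (pchar2_eq (z := a)); ring.
rewrite !inE /=; apply/andP/imsetP => [[/eqP xyz Pxyz]|[[u v] Quv [-> -> ->]]].
  have zE : z = x + y + a by apply: (pchar2_eq (z := - x - y)); rewrite -xyz; ring.
  have xyaE : x + a + (y + a) + a = x + y + a by apply: (pchar2_eq (z := a)); ring.
  subst z; exists (x + a, y + a); last by rewrite /g /= !shiftK xyaE.
  by rewrite inE /= -PQ !shiftK xyaE.
rewrite inE in Quv; rewrite PQ Quv; split=> //.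
by apply/eqP; apply: (pchar2_eq (z := u + v + a)); ring.
Qed.

Section NormForm.
Hypothesis x2x1_neq0 : forall t : F, t ^+ 2 + t + 1 != 0.

Lemma normform_eq0 (u v : F) : (u ^+ 2 + u * v + v ^+ 2 == 0) = (u == 0) && (v == 0).
Proof.
apply/eqP/andP => [uv0|[/eqP -> /eqP ->]]; last by rewrite expr0n mul0r !addr0.
have v0 : v = 0.
  apply: contraNeq (x2x1_neq0 (u / v)) => v_neq0; apply/eqP.
  have -> : (u / v) ^+ 2 + u / v + 1 = (u ^+ 2 + u * v + v ^+ 2) / v ^+ 2 by field.
  by rewrite uv0 mul0r.
by move: uv0; rewrite v0 mulr0 expr0n !addr0 => /eqP; rewrite expf_eq0.
Qed.

Lemma card_normform0 : #|[set p : F * F | p.1 ^+ 2 + p.1 * p.2 + p.2 ^+ 2 == 0]| = 1%N.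
Proof.
suff -> : [set p : F * F | p.1 ^+ 2 + p.1 * p.2 + p.2 ^+ 2 == 0] = [set (0, 0)] by rewrite cards1.
by apply/setP => -[u v]; rewrite !inE /= normform_eq0 xpair_eqE.
Qed.

(* The solutions are [(sqrt c, 0)] and the [(t w, w)] with [w^2 (t^2 + t + 1) = c]. *)
Lemma card_normform c : c != 0 ->
  #|[set p : F * F | p.1 ^+ 2 + p.1 * p.2 + p.2 ^+ 2 == c]| = #|F|.+1.
Proof.
move=> c_neq0.
pose w t := sqrtf (c / (t ^+ 2 + t + 1)).
have w_neq0 t : w t != 0.
  apply: contra_neq (mulf_neq0 c_neq0 (invr_neq0 (x2x1_neq0 t))) => wt0.
  by rewrite -[_ / _]sqrtfK -/(w t) wt0 expr0n.
pose h (o : option F) : F * F := if o is Some t then (t * w t, w t) else (sqrtf c, 0).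
have h_inj : injective h.
  move=> [x|] [y|] //= []; last 2 first.
  - by move=> _ /eqP; rewrite (negPf (w_neq0 x)).
  - by move=> _ /eqP; rewrite eq_sym (negPf (w_neq0 y)).
  by move=> + wE; rewrite wE => /(mulIf (w_neq0 y)) ->.
rewrite -card_option -cardsT -(card_imset _ h_inj); apply: eq_card => -[u v].
rewrite !inE; apply/eqP/imsetP => [uv_c|[[t|] _ [-> ->]]]; last 2 first.
- by rewrite -mulrA -expr2 exprMn sqrtfK; have := x2x1_neq0 t => ?; field.
- by rewrite sqrtfK mulr0 expr0n !addr0.
have [v0|v_neq0] := eqVneq v 0.
  by exists None => //; move: uv_c; rewrite /h v0 mulr0 expr0n !addr0 => <-; rewrite sqrfK.
exists (Some (u / v)) => //; rewrite /h /w.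
have -> : c / ((u / v) ^+ 2 + u / v + 1) = v ^+ 2.
  have -> : (u / v) ^+ 2 + u / v + 1 = (u ^+ 2 + u * v + v ^+ 2) / v ^+ 2 by field.
  by rewrite uv_c invf_div mulrC divfK.
by rewrite sqrfK divfK.
Qed.

Lemma card_e2_eq_sqr a k :
  #|[set p : F * F * F | (p.1.1 + p.1.2 + p.2 == a) && (e2 p.1.1 p.1.2 p.2 == k ^+ 2)]|
    = if k == a then 1%N else #|F|.+1.
Proof.
rewrite (@card_sum3_shift a (fun x y z => e2 x y z == k ^+ 2)
                          (fun u v => u ^+ 2 + u * v + v ^+ 2 == (k + a) ^+ 2)).
  have [->|k_neq_a] := eqVneq k a; first by rewrite addrr_pchar2 // expr0n card_normform0.
  by apply: card_normform; rewrite expf_eq0 /= addr_eq0 oppr_pchar2.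
move=> u v; rewrite sqrrD_pchar2 -(inj_eq (addIr (a ^+ 2))); congr (_ == _).
apply: (pchar2_eq (z := u * v + 2%:R * (a * u + a * v + a ^+ 2))).
by rewrite /e2; ring.
Qed.

End NormForm.

Lemma card_e2_addsqr_eq_sqr a k :
  #|[set p : F * F * F | (p.1.1 + p.1.2 + p.2 == a) &&
                          (e2 p.1.1 p.1.2 p.2 + p.2 ^+ 2 == k ^+ 2)]|
    = if k == 0 then (#|F|.*2).-1 else #|F|.-1.
Proof.
rewrite (@card_sum3_shift a (fun x y z => e2 x y z + z ^+ 2 == k ^+ 2)
                          (fun u v => u * v == k ^+ 2)).
  have [->|k_neq0] := eqVneq k 0; first by rewrite expr0n card_mul_eq0.
  by rewrite card_mul_eq // expf_eq0.
move=> u v; congr (_ == _).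
by apply: (pchar2_eq (z := a * u + a * v + a ^+ 2 + (u + v + a) ^+ 2)); rewrite /e2; ring.
Qed.

End CharTwoFinField.

Lemma odd_expn2_mod3 m : odd m -> (2 ^ m %% 3 = 2)%N.
Proof.
move=> m_odd; rewrite -(odd_double_half m) m_odd -mul2n expnS expnM -modnMmr -modnXm.
by rewrite exp1n.
Qed.

Lemma red2_is_zmod_morphism : zmod_morphism red2.
Proof. by do 2!case=> [[|[|[|[|?]]]] ?] //; apply/val_inj. Qed.

Lemma red2_is_monoid_morphism : monoid_morphism red2.
Proof. by split; [apply/val_inj | do 2!case=> [[|[|[|[|?]]]] ?] //; apply/val_inj]. Qed.

HB.instance Definition _ := GRing.isZmodMorphism.Build _ _ red2 red2_is_zmod_morphism.
HB.instance Definition _ := GRing.isMonoidMorphism.Build _ _ red2 red2_is_monoid_morphism.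

Lemma red2_1 : red2 1 = 1. Proof. exact: val_inj. Qed.

Lemma red2_eq0 (c : 'Z_4) : red2 c = 0 -> c = (c %/ 2)%:R *+ 2.
Proof. by case: c => [[|[|[|[|?]]]] ?] // _; apply/val_inj. Qed.

Lemma red2_mulr2n_eq0 (c : 'Z_4) : c *+ 2 = 0 -> red2 c = 0.
Proof. by case: c => [[|[|[|[|?]]]] ?] // /eqP //= _; apply/val_inj. Qed.

Section GaloisRing.
Variables (m : nat) (f : {poly 'Z_4}).
Hypotheses (m_gt0 : (0 < m)%N) (f_monic : f \is monic) (size_f : size f = m.+1).
Hypothesis f_irr : irreducible_poly (map_poly red2 f).

Local Notation R := {poly %/ f}.
Local Notation fb := (map_poly red2 f).

Lemma mk_monic_f : mk_monic f = f.
Proof. by rewrite /mk_monic size_f f_monic ltnS m_gt0. Qed.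

Lemma size_fb : size fb = m.+1.
Proof. by rewrite size_map_poly_id0 // (monicP f_monic) red2_1 oner_eq0. Qed.

Lemma fb_monic : fb \is monic.
Proof.
apply/monicP; rewrite lead_coef_map_eq (monicP f_monic); first exact: red2_1.
by change (red2 1 != 0); rewrite red2_1 oner_eq0.
Qed.

Lemma mk_monic_fb : mk_monic fb = fb.
Proof. by rewrite /mk_monic size_fb fb_monic ltnS m_gt0. Qed.

Definition residue_field := {poly %/ fb with (f_irr, fb_monic)}.
Local Notation F := residue_field.

Lemma card_residue_field : #|F| = (2 ^ m)%N.
Proof. by rewrite card_qfpoly card_Fp // size_fb. Qed.

Lemma pchar_residue_field : 2 \in [pchar F].
Proof.
rewrite inE /=; apply/eqP/val_inj => /=.
by rewrite -polyCD (_ : 1 + 1 = 0 :> 'F_2) ?polyC0 //; exact: val_inj.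
Qed.

Definition residue (r : R) : F := in_qpoly fb (map_poly red2 (r : {poly 'Z_4})).

Lemma residue_is_zmod_morphism : zmod_morphism residue.
Proof. by move=> x y; rewrite /residue /= !raddfB. Qed.

Lemma in_qpoly_fb : in_qpoly fb fb = 0.
Proof. by apply: val_inj; rewrite /= mk_monic_fb Pdiv.RingMonic.rmodpp ?fb_monic. Qed.

Lemma residue_is_monoid_morphism : monoid_morphism residue.
Proof.
split=> [|x y]; first by rewrite /residue /= rmorph1 in_qpoly1.
rewrite /residue poly_of_qpolyM; set p := (x : {poly 'Z_4}) * y.
have -> : Pdiv.CommonRing.rmodp p (mk_monic f)
          = p - Pdiv.CommonRing.rdivp p (mk_monic f) * mk_monic f.
  by rewrite {2}(Pdiv.RingMonic.rdivp_eq (monic_mk_monic f) p) addrC addKr.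
have map_mk_monic_f : map_poly red2 (mk_monic f) = fb by rewrite mk_monic_f.
by rewrite !(rmorphB, rmorphM) /= map_mk_monic_f in_qpoly_fb mulr0 subr0.
Qed.

HB.instance Definition _ := GRing.isZmodMorphism.Build _ _ residue residue_is_zmod_morphism.
HB.instance Definition _ :=
  GRing.isMonoidMorphism.Build _ _ residue residue_is_monoid_morphism.

Lemma residueE (r : R) : residue r = map_poly red2 (r : {poly 'Z_4}) :> {poly 'F_2}.
Proof.
apply: in_qpoly_small; rewrite mk_monic_fb size_fb -size_f.
apply: leq_ltn_trans (size_poly _ _) _.
by apply: leq_trans (size_mk_monic r) _; rewrite mk_monic_f.
Qed.

Lemma qpoly_inj : injective (fun x : R => x : {poly 'Z_4}).
Proof. exact: val_inj. Qed.

Lemma poly_mulr2n (s : R) : (s *+ 2 : R) = (s : {poly 'Z_4}) *+ 2 :> {poly 'Z_4}.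
Proof. by rewrite !mulr2n. Qed.

Lemma residue_eq0 (r : R) : residue r = 0 -> exists s : R, r = s *+ 2.
Proof.
move=> r0; have red2_r i : red2 (r : {poly 'Z_4})`_i = 0.
  by rewrite -coef_map_id0 ?raddf0 // -residueE r0 coef0.
exists (in_qpoly f (map_poly (fun c : 'Z_4 => (c %/ 2)%:R) (r : {poly 'Z_4}))).
apply: qpoly_inj; rewrite poly_mulr2n in_qpoly_small; last first.
  exact: leq_ltn_trans (size_poly _ _) (size_mk_monic r).
by apply/polyP => i; rewrite coefMn coef_map_id0 // -red2_eq0.
Qed.

Lemma mulrn4_eq0 (x : R) : x *+ 4 = 0.
Proof.
rewrite -mulr_natr (_ : 4%:R = 0 :> R) ?mulr0 //; apply: qpoly_inj.
by rewrite qpolyC_natr -polyC_natr (_ : 4%:R = 0 :> 'Z_4) ?polyC0 //; apply: val_inj.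
Qed.

Lemma mulr2n_eq0 (r : R) : (r *+ 2 == 0) = (residue r == 0).
Proof.
apply/eqP/eqP => [r2|/residue_eq0[s ->]]; last by rewrite -mulrnA mulrn4_eq0.
have r2p : (r : {poly 'Z_4}) *+ 2 = 0 by rewrite -poly_mulr2n r2.
suff r0 : (residue r : {poly 'F_2}) = 0 by apply: val_inj.
rewrite residueE; apply/polyP => i; rewrite coef_map_id0 ?raddf0 // coef0.
by apply: red2_mulr2n_eq0; rewrite -coefMn r2p coef0.
Qed.

Lemma residue_add_mulr2n (t s : R) : residue (t + s *+ 2) = residue t.
Proof. by rewrite rmorphD rmorphMn -mulr_natr (pcharf0 pchar_residue_field) mulr0 addr0. Qed.

Lemma eq_mulr2n (w s : R) : (w *+ 2 == s *+ 2) = (residue w == residue s).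
Proof. by rewrite -subr_eq0 -mulrnBl mulr2n_eq0 rmorphB subr_eq0. Qed.

Lemma sqr_add_mulr2n (x s : R) : (x + s *+ 2) ^+ 2 = x ^+ 2.
Proof.
have -> : (x + s *+ 2) ^+ 2 = x ^+ 2 + (x * s + s ^+ 2) *+ 4 by ring.
by rewrite mulrn4_eq0 addr0.
Qed.

Lemma oppr_add_mulr2n (x : R) : - x = x + x *+ 2.
Proof.
apply/eqP; rewrite -subr_eq0.
have -> : - x - (x + x *+ 2) = - (x *+ 4) by ring.
by rewrite mulrn4_eq0 oppr0.
Qed.

Lemma expn2m_add_mulr2n (x s : R) : (x + s *+ 2) ^+ (2 ^ m) = x ^+ (2 ^ m).
Proof. by rewrite -(prednK m_gt0) expnS !exprM sqr_add_mulr2n. Qed.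

Section Teichmuller.
Variable beta : R.
Hypothesis beta_exp_n : beta ^+ (2 ^ m - 1) = 1.
Hypothesis beta_order : forall k : nat, (0 < k < 2 ^ m - 1)%N -> beta ^+ k != 1.

Local Notation n := (2 ^ m - 1)%N.
Local Notation T := (teich m beta).

Lemma n_succ : n.+1 = (2 ^ m)%N.
Proof. by rewrite subn1 prednK ?expn_gt0. Qed.

Lemma n_gt0 : (0 < n)%N.
Proof. by rewrite -ltnS n_succ -{1}(expn0 2) ltn_exp2l. Qed.

Lemma beta_exp_subnK i : (i <= n)%N -> beta ^+ (n - i) * beta ^+ i = 1.
Proof. by move=> le_in; rewrite -exprD subnK. Qed.

Lemma beta_exp_modn k : beta ^+ k = beta ^+ (k %% n).
Proof. by rewrite {1}(divn_eq k n) exprD mulnC exprM beta_exp_n expr1n mul1r. Qed.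

Lemma beta_exp_inj i j : (i < n)%N -> (j < n)%N -> beta ^+ i = beta ^+ j -> i = j.
Proof.
wlog le_ij : i j / (i <= j)%N.
  move=> wlog_ij i_lt j_lt e; case: (leqP i j) => [le_ij|/ltnW le_ji].
    exact: wlog_ij.
  exact/esym/wlog_ij.
move=> i_lt j_lt e.
have beta_ji : beta ^+ (j - i) = 1.
  rewrite -(beta_exp_subnK (ltnW i_lt)) e -exprD addnBAC ?(ltnW i_lt) //.
  by rewrite -addnBA // exprD beta_exp_n mul1r.
have : ~~ (0 < j - i < n)%N by apply/negP => /beta_order; rewrite beta_ji eqxx.
rewrite subn_gt0 (leq_ltn_trans (leq_subr i j) j_lt) andbT -leqNgt => le_ji.
by apply/eqP; rewrite eqn_leq le_ij.
Qed.

Lemma teichP x : reflect (x = 0 \/ exists k, x = beta ^+ k) (x \in T).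
Proof.
rewrite /teich in_setU1; apply: (iffP orP) => [[/eqP ->|/imsetP[i _ ->]]|]; first by left.
  by right; exists i.
case=> [->|[k ->]]; [by left | right].
by apply/imsetP; exists (Ordinal (ltn_pmod k n_gt0)); rewrite //= beta_exp_modn.
Qed.

Lemma teich0 : 0 \in T. Proof. by apply/teichP; left. Qed.
Lemma teich_exp k : beta ^+ k \in T. Proof. by apply/teichP; right; exists k. Qed.

Lemma teichM : {in T &, forall x y, x * y \in T}.
Proof.
move=> x y /teichP[->|[i ->]]; first by rewrite mul0r teich0.
by case/teichP=> [->|[j ->]]; rewrite ?mulr0 ?teich0 // -exprD teich_exp.
Qed.

Lemma teichX x k : x \in T -> x ^+ k \in T.
Proof.
move=> xT; elim: k => [|k IHk]; first by rewrite expr0 -(expr0 beta) teich_exp.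
by rewrite exprS teichM.
Qed.

Lemma teich_expn2m x : x \in T -> x ^+ (2 ^ m) = x.
Proof.
case/teichP=> [->|[k ->]]; first by rewrite expr0n expn_eq0.
by rewrite -exprM -n_succ mulnS exprD mulnC exprM beta_exp_n expr1n mulr1.
Qed.

(* Teichmüller elements are fixed by [x |-> x ^ 2^m], which kills even parts. *)
Lemma residue_teich_inj : {in T &, injective residue}.
Proof.
move=> x y xT yT /eqP; rewrite -subr_eq0 -rmorphB => /eqP /residue_eq0 [s xys].
by rewrite -(teich_expn2m xT) -(teich_expn2m yT) -(subrK y x) xys addrC expn2m_add_mulr2n.
Qed.

Lemma card_teich : #|T| = (2 ^ m)%N.
Proof.
rewrite /teich cardsU1 card_imset; last by move=> i j /beta_exp_inj e; apply/val_inj/e.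
have -> : (0 : R) \notin [set beta ^+ (nat_of_ord i) | i : 'I_n].
  apply/imsetP => -[i _ beta_i0]; have := beta_exp_subnK (ltnW (ltn_ord i)).
  by rewrite -beta_i0 mulr0 => /eqP; rewrite eq_sym oner_eq0.
by rewrite card_ord add1n n_succ.
Qed.

Lemma residue_teich_onto y : exists2 x, x \in T & residue x = y.
Proof.
have : residue @: T = [set: F].
  apply/eqP; rewrite eqEcard subsetT cardsT card_residue_field.
  by rewrite (card_in_imset residue_teich_inj) card_teich leqnn.
by move=> /setP/(_ y); rewrite !inE => /imsetP[x xT ->]; exists x.
Qed.

Lemma teich_sqrt x : x \in T -> exists2 y, y \in T & y ^+ 2 = x.
Proof.
move=> xT; exists (x ^+ (2 ^ m.-1)); first exact: teichX.
by rewrite -exprM -expnSr prednK // teich_expn2m.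
Qed.

Lemma teich_decomp r : exists t s, t \in T /\ r = t + s *+ 2.
Proof.
have [t tT rt] := residue_teich_onto (residue r).
have /residue_eq0[s rts] : residue (r - t) = 0 by rewrite rmorphB /= rt subrr.
by exists t, s; split; rewrite // -rts addrC subrK.
Qed.

Lemma eq_teich_decomp t t' s s' : t \in T -> t' \in T ->
  (t + s *+ 2 == t' + s' *+ 2) = (residue t == residue t') && (residue s == residue s').
Proof.
move=> tT t'T; rewrite -[residue s == _]eq_mulr2n.
apply/eqP/andP => [e|[/eqP rt /eqP->]]; last by rewrite (residue_teich_inj tT t'T rt).
have rt : residue t = residue t'.
  by move/(congr1 residue): e; rewrite !residue_add_mulr2n.
by split; [rewrite rt | move: e; rewrite (residue_teich_inj tT t'T rt) => /addrI->].
Qed.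

(* For [a = x^2], [b = y^2] and [x + y = t + 2s]: [a + b = (x + y)^2 - 2xy = t^2 + 2xy]. *)
Lemma teich_add a b : a \in T -> b \in T ->
  exists c w, [/\ c \in T, a + b = c + w *+ 2 & residue w ^+ 2 = residue a * residue b].
Proof.
move=> /teich_sqrt[x xT <-] /teich_sqrt[y yT <-].
have [t [s [tT xyts]]] := teich_decomp (x + y).
exists (t ^+ 2), (x * y); split; first exact: teichX.
  have -> : x ^+ 2 + y ^+ 2 = (x + y) ^+ 2 + (x * y) *+ 2 - (x * y) *+ 4 by ring.
  by rewrite mulrn4_eq0 subr0 xyts sqr_add_mulr2n.
by rewrite !rmorphXn rmorphM exprMn.
Qed.

Lemma teich_add3 x y z : x \in T -> y \in T -> z \in T ->
  exists t w, [/\ t \in T, x + y + z = t + w *+ 2 &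
                  residue w ^+ 2 = e2 (residue x) (residue y) (residue z)].
Proof.
move=> xT yT zT; have [u [w1 [uT xyu w1E]]] := teich_add xT yT.
have [t [w2 [tT uzt w2E]]] := teich_add uT zT.
exists t, (w1 + w2); split=> //; first by rewrite xyu addrAC uzt; ring.
have ruE : residue u = residue x + residue y.
  by move/(congr1 residue): xyu; rewrite residue_add_mulr2n rmorphD.
by rewrite rmorphD sqrrD_pchar2 ?pchar_residue_field // w1E w2E ruE.
Qed.

Lemma mem_negset_teich t s : t \in T -> (t + s *+ 2 \in negset T) = (residue s == residue t).
Proof.
move=> tT; apply/imsetP/idP => [[t' t'T]|st]; last first.
  by exists t => //; apply/eqP; rewrite oppr_add_mulr2n eq_teich_decomp // eqxx.
by rewrite oppr_add_mulr2n => /eqP; rewrite eq_teich_decomp // => /andP[/eqP-> /eqP->].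
Qed.

Lemma mem_teich_decomp t s : t \in T -> (t + s *+ 2 \in T) = (residue s == 0).
Proof.
move=> tT; apply/idP/idP => [rT|]; last by rewrite -mulr2n_eq0 => /eqP->; rewrite addr0.
have /(residue_teich_inj rT tT) := residue_add_mulr2n t s.
by rewrite -mulr2n_eq0 -{2}[t]addr0 => /addrI->.
Qed.

Lemma mult_sum3_residue c (G : F -> F -> F -> F) :
  residue c = 1 ->
  (forall x y z, x \in T -> y \in T -> z \in T -> exists t w,
     [/\ t \in T, x + y + c * z = t + w *+ 2 &
         residue w ^+ 2 = G (residue x) (residue y) (residue z)]) ->
  forall t s, t \in T ->
  mult_sum3 T c (t + s *+ 2) =
    #|[set p : F * F * F | (p.1.1 + p.1.2 + p.2 == residue t) &&
                           (G p.1.1 p.1.2 p.2 == residue s ^+ 2)]|.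
Proof.
move=> rc1 decompG t s tT.
have sum3E x y z : x \in T -> y \in T -> z \in T ->
    (x + y + c * z == t + s *+ 2) = (residue x + residue y + residue z == residue t) &&
                                   (G (residue x) (residue y) (residue z) == residue s ^+ 2).
  move=> xT yT zT; have [u [w [uT xyzE wG]]] := decompG x y z xT yT zT.
  rewrite xyzE eq_teich_decomp // -wG (inj_eq (sqrf_inj pchar_residue_field)).
  congr (andb (_ == _) _); move/(congr1 residue): xyzE.
  by rewrite residue_add_mulr2n !rmorphD rmorphM /= rc1 mul1r => <-.
pose phi (p : R * R * R) := (residue p.1.1, residue p.1.2, residue p.2).
rewrite /mult_sum3; set S := [set _ | _].
have memS p : (p \in S) =
    [&& p.1.1 \in T, p.1.2 \in T, p.2 \in T & p.1.1 + p.1.2 + c * p.2 == t + s *+ 2].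
  by rewrite in_set.
have phi_inj : {in S &, injective phi}.
  move=> [[x1 y1] z1] [[x2 y2] z2]; rewrite !memS /=.
  move=> /and4P[x1T y1T z1T _] /and4P[x2T y2T z2T _] /eqP.
  rewrite !xpair_eqE => /andP[/andP[/eqP ex /eqP ey] /eqP ez].
  by rewrite (residue_teich_inj x1T x2T ex) (residue_teich_inj y1T y2T ey)
             (residue_teich_inj z1T z2T ez).
rewrite -(card_in_imset phi_inj); apply: eq_card => -[[x y] z]; rewrite in_set /=.
apply/imsetP/idP => [[[[x' y'] z']] + [-> -> ->]|].
  by rewrite memS /= => /and4P[x'T y'T z'T]; rewrite sum3E.
have [x' x'T <-] := residue_teich_onto x.
have [y' y'T <-] := residue_teich_onto y.
have [z' z'T <-] := residue_teich_onto z.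
by rewrite -sum3E // => xyz; exists (x', y', z'); rewrite // memS /= x'T y'T z'T.
Qed.

Lemma mult_sum3_add : odd m ->
  forall r, mult_sum3 T 1 r = if r \in negset T then 1%N else (2 ^ m).+1.
Proof.
move=> m_odd r; have [t [s [tT ->]]] := teich_decomp r.
rewrite mem_negset_teich // (@mult_sum3_residue _ (@e2 F) (rmorph1 _)) //.
  rewrite card_e2_eq_sqr ?pchar_residue_field ?card_residue_field //.
  by apply: no_root_x2x1; rewrite ?pchar_residue_field // card_residue_field odd_expn2_mod3.
by move=> x y z xT yT zT; rewrite mul1r; exact: teich_add3.
Qed.

Lemma mult_sum3_sub r :
  mult_sum3 T (-1) r = if r \in T then (2 ^ m.+1 - 1)%N else (2 ^ m - 1)%N.
Proof.
have [t [s [tT ->]]] := teich_decomp r.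
rewrite mem_teich_decomp // (@mult_sum3_residue _ (fun x y z => e2 x y z + z ^+ 2)) //.
- rewrite card_e2_addsqr_eq_sqr ?pchar_residue_field // card_residue_field.
  by rewrite -mul2n -expnS !subn1.
- by rewrite rmorphN1 oppr_pchar2 ?pchar_residue_field.
move=> x y z xT yT zT; have [u [w [uT xyzE wE]]] := teich_add3 xT yT zT.
exists u, (w + z); split=> //.
  have -> : x + y + -1 * z = (x + y + z) + z *+ 2 - z *+ 4 by ring.
  by rewrite xyzE mulrn4_eq0 subr0; ring.
by rewrite rmorphD sqrrD_pchar2 ?pchar_residue_field // wE.
Qed.

End Teichmuller.
End GaloisRing.

Theorem lemmaB3 (m : nat) (f : {poly 'Z_4}) (beta : {poly %/ f}) :
  odd m ->
  f \is monic -> size f = m.+1 ->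
  irreducible_poly (map_poly red2 f) ->
  beta ^+ (2 ^ m - 1) = 1 ->
  (forall k : nat, (0 < k < 2 ^ m - 1)%N -> beta ^+ k != 1) ->
  let T := teich m beta in
  ((forall r, r \in negset T -> mult_sum3 T 1 r = 1%N) /\
   (forall r, r \notin negset T -> mult_sum3 T 1 r = (2 ^ m + 1)%N)) /\
  ((forall r, r \in T -> mult_sum3 T (-1) r = (2 ^ m.+1 - 1)%N) /\
   (forall r, r \notin T -> mult_sum3 T (-1) r = (2 ^ m - 1)%N)).
Proof.
move=> m_odd f_monic size_f f_irr beta_n beta_order T.
have m_gt0 : (0 < m)%N by case: m m_odd {size_f beta_n beta_order T}.
have add := mult_sum3_add m_gt0 f_monic size_f f_irr beta_n beta_order m_odd.
have sub := mult_sum3_sub m_gt0 f_monic size_f f_irr beta_n beta_order.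
by split; split=> r r_in; rewrite ?add ?sub ?r_in ?(negPf r_in) ?addn1.
Qed.
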